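(* Let $\Sigma$ be a set of pairs of $\tau$-terms. Then $\mathrm{Mod}(\Sigma)=\{\mathbf A:\Sigma\subseteq\theta_{\mathbf A}\}$ (the class of t-algebras of type $\tau$ in which all pairs of $\Sigma$ have equal term operations) is an Et-variety.
   Context: $\mathbb N=\{1,2,\dots\}$. A thread on $A$ is $s\in A^{\mathbb N}$; $r[a_1,\dots,a_n]$ is the thread with entries $a_i$ for $i\le n$ and $r_i$ for $i>n$; $r\equiv_{\mathbb N}s$ iff $\{i:r_i\neq s_i\}$ is finite, $[s]_{\mathbb N}$ its class. A trace on $A$ is a nonempty $\mathsf a\subseteq A^{\mathbb N}$ that is a union of $\equiv_{\mathbb N}$-classes. A t-algebra of type $\tau$ and trace $\mathsf a$ is $\mathbf A=(A,\mathsf a,\sigma^{\mathbf A})_{\sigma\in\tau}$ with each $\sigma^{\mathbf A}:\mathsf a\to A$ an arbitrary map. t-subalgebra: $(B,\mathsf b,\sigma^{\mathbf A}|_{\mathsf b})$ with $B\subseteq A$, $\mathsf b\subseteq\mathsf a$ a trace on $B$, $\sigma^{\mathbf A}(\mathsf b)\subseteq B$. t-homomorphism $\mathbf A\to\mathbf B$: $f:A\to B$ with $f^{\mathbb N}(\mathsf a)\subseteq\mathsf b$ ($f^{\mathbb N}$ coordinatewise) and $f\circ\sigma^{\mathbf A}=\sigma^{\mathbf B}\circ f^{\mathbb N}$ on $\mathsf a$; onto if $f$ and $f^{\mathbb N}:\mathsf a\to\mathsf b$ are surjective. t-product: universe $\prod_jA_j$, trace $\prod_j\mathsf a_j$ (with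 $(s^j)_j$ identified with the thread of entries $(s^j_k)_j$), operations componentwise. A t-variety is a class closed under t-homomorphic images, t-subalgebras and t-products. $\tau$-terms $T_\tau$: least set containing $\mathsf e_1,\mathsf e_2,\dots$ and $\sigma(t_1,\dots,t_n,\mathsf e_{n+1},\mathsf e_{n+2},\dots)$ for $\sigma\in\tau$, $n\ge0$. Term operations $t^{\mathbf A}:\mathsf a\to A$: $\mathsf e_i^{\mathbf A}(s)=s_i$, $\sigma(t_1,\dots,t_n,\mathsf e_{n+1},\dots)^{\mathbf A}(s)=\sigma^{\mathbf A}(s[t_1^{\mathbf A}(s),\dots,t_n^{\mathbf A}(s)])$. $\theta_{\mathbf A}=\{(t,u)\in T_\tau^2:t^{\mathbf A}=u^{\mathbf A}\}$. For $s\in\mathsf a$, $\mathbf A_{\bar s}$ has universe $A_{\bar s}=\{t^{\mathbf A}(s):t\in T_\tau\}$, trace $[s]_{\mathbb N}\cap(A_{\bar s})^{\mathbb N}$ and restricted operations. A class $K$ is closed under t-expansion if for every t-algebra $\mathbf A$ of type $\tau$ and trace $\mathsf a$, $\mathbf A_{\bar s}\in K$ for all $s\in\mathsf a$ implies $\mathbf A\in K$. An Et-variety is a t-variety closed under t-expansion. *)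

From Stdlib Require Import List Classical ClassicalEpsilon FunctionalExtensionality Lia PeanoNat.
Import ListNotations.
Set Implicit Arguments.

(* Threads are functions nat -> A; the entry s_{i+1} of the paper is (s i). *)

Definition eqN {A : Type} (r s : nat -> A) : Prop :=
  exists n, forall i, n <= i -> r i = s i.

(* Operations are
   represented as total maps on threads; only their values on the trace matter
   (all notions below only evaluate them on threads of the trace). *)
Record talg (tau : Type) := TAlg {
  car : Type;
  tr : (nat -> car) -> Prop;
  ops : tau -> (nat -> car) -> car;
  tr_ne : exists s, tr s;
  tr_closed : forall r s, eqN r s -> tr r -> tr s
}.
Arguments car {tau} _.
Arguments tr {tau} _ _.
Arguments ops {tau} _ _ _.

(* tau-terms: Var i is e_{i+1};  App f [t1;...;tn] is f(t1,...,tn,e_{n+1},...) *)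
Inductive term (tau : Type) : Type :=
| Var : nat -> term tau
| App : tau -> list (term tau) -> term tau.
Arguments Var {tau} _.
Arguments App {tau} _ _.

Definition override {A : Type} (s : nat -> A) (l : list A) : nat -> A :=
  fun i => nth i l (s i).

Fixpoint eval {tau} (A : talg tau) (t : term tau) (s : nat -> car A) : car A :=
  match t with
  | Var i => s i
  | App f ts => ops A f (override s (map (fun u => eval A u s) ts))
  end.

Definition theta {tau} (A : talg tau) (t u : term tau) : Prop :=
  forall s, tr A s -> eval A t s = eval A u s.

Definition Mod {tau} (Sigma : term tau -> term tau -> Prop) (A : talg tau) : Prop :=
  forall t u, Sigma t u -> theta A t u.

Definition thom {tau} (A B : talg tau) (f : car A -> car B) : Prop :=
  (forall s, tr A s -> tr B (fun i => f (s i))) /\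
  (forall g s, tr A s -> f (ops A g s) = ops B g (fun i => f (s i))).

Definition onto_thom {tau} (A B : talg tau) (f : car A -> car B) : Prop :=
  thom A B f /\ (forall y, exists x, f x = y) /\
  (forall r, tr B r -> exists s, tr A s /\ forall i, f (s i) = r i).

Section Sub.
Context {tau : Type} (A : talg tau) (P : car A -> Prop)
  (b : (nat -> sig P) -> Prop)
  (b_ne : exists r, b r)
  (b_closed : forall r s, eqN r s -> b r -> b s)
  (b_sub : forall r, b r -> tr A (fun i => proj1_sig (r i)))
  (b_ops : forall g r, b r -> P (ops A g (fun i => proj1_sig (r i)))).

Definition sub_default : sig P :=
  proj1_sig (constructive_indefinite_description _ b_ne) 0.

Definition sub_ops (g : tau) (r : nat -> sig P) : sig P :=
  match excluded_middle_informative (b r) with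
  | left h => exist P (ops A g (fun i => proj1_sig (r i))) (b_ops g h)
  | right _ => sub_default
  end.

Definition tsub : talg tau :=
  @TAlg tau (sig P) b sub_ops b_ne b_closed.
End Sub.

Section Prod.
Context {tau : Type} (J : Type) (A : J -> talg tau).

Definition prod_tr (s : nat -> forall j, car (A j)) : Prop :=
  forall j, tr (A j) (fun k => s k j).

Lemma prod_tr_ne : exists s, prod_tr s.
Proof.
  exists (fun k j => proj1_sig (constructive_indefinite_description _ (tr_ne (A j))) k).
  intro j. exact (proj2_sig (constructive_indefinite_description _ (tr_ne (A j)))).
Qed.

Lemma prod_tr_closed : forall r s, eqN r s -> prod_tr r -> prod_tr s.
Proof.
  intros r s [n Hn] Hr j. apply (tr_closed (A j)) with (r := fun k => r k j).
  - exists n. intros i Hi. rewrite Hn; auto.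
  - apply Hr.
Qed.

Definition tprod : talg tau :=
  @TAlg tau (forall j, car (A j)) prod_tr
    (fun g s j => ops (A j) g (fun k => s k j)) prod_tr_ne prod_tr_closed.
End Prod.

Section Expand.
Context {tau : Type} (A : talg tau) (s : nat -> car A) (hs : tr A s).

Definition Abar_set (x : car A) : Prop := exists t : term tau, x = eval A t s.

Definition Abar_tr (r : nat -> sig Abar_set) : Prop :=
  eqN (fun i => proj1_sig (r i)) s.

Lemma Abar_ne : exists r, Abar_tr r.
Proof.
  exists (fun i => exist Abar_set (s i) (ex_intro _ (Var i) eq_refl)).
  exists 0. reflexivity.
Qed.

Lemma Abar_closed : forall r r', eqN r r' -> Abar_tr r -> Abar_tr r'.
Proof.
  intros r r' [n Hn] [m Hm]. exists (max n m). intros i Hi.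
  rewrite <- Hn by lia. apply Hm. lia.
Qed.

Lemma Abar_sub : forall r, Abar_tr r -> tr A (fun i => proj1_sig (r i)).
Proof.
  intros r Hr. apply (tr_closed A) with (r := s); [|exact hs].
  destruct Hr as [n Hn]. exists n. intros i Hi. symmetry. auto.
Qed.

Lemma Abar_ops : forall g r, Abar_tr r -> Abar_set (ops A g (fun i => proj1_sig (r i))).
Proof.
  intros g r [n Hn].
  set (tt := fun i => proj1_sig (constructive_indefinite_description _ (proj2_sig (r i)))).
  assert (Htt : forall i, proj1_sig (r i) = eval A (tt i) s).
  { intro i. unfold tt. exact (proj2_sig (constructive_indefinite_description _ (proj2_sig (r i)))). }
  exists (App g (map tt (seq 0 n))). simpl. f_equal.
  apply functional_extensionality. intro i. unfold override.
  rewrite map_map.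
  destruct (Nat.lt_ge_cases i n) as [Hi|Hi].
  - rewrite nth_indep with (d' := eval A (tt 0) s) by (rewrite length_map, length_seq; lia).
    rewrite (map_nth (fun x => eval A (tt x) s)), seq_nth by lia. simpl. symmetry. auto.
  - rewrite nth_overflow by (rewrite length_map, length_seq; lia). rewrite Hn; auto.
Qed.

Definition Abar : talg tau :=
  @tsub tau A Abar_set Abar_tr Abar_ne Abar_closed Abar_ops.
End Expand.

Definition closed_H {tau} (K : talg tau -> Prop) : Prop :=
  forall (A B : talg tau) (f : car A -> car B), K A -> onto_thom A B f -> K B.

Definition closed_S {tau} (K : talg tau -> Prop) : Prop :=
  forall (A : talg tau) (P : car A -> Prop) (b : (nat -> sig P) -> Prop)
    (b_ne : exists r, b r)
    (b_closed : forall r s, eqN r s -> b r -> b s)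
    (b_sub : forall r, b r -> tr A (fun i => proj1_sig (r i)))
    (b_ops : forall g r, b r -> P (ops A g (fun i => proj1_sig (r i)))),
    K A -> K (@tsub tau A P b b_ne b_closed b_ops).

Definition closed_P {tau} (K : talg tau -> Prop) : Prop :=
  forall (J : Type) (A : J -> talg tau), (forall j, K (A j)) -> K (tprod A).

Definition t_variety {tau} (K : talg tau -> Prop) : Prop :=
  closed_H K /\ closed_S K /\ closed_P K.

Definition closed_expansion {tau} (K : talg tau -> Prop) : Prop :=
  forall (A : talg tau), (forall s (hs : tr A s), K (Abar A s)) -> K A.

Definition Et_variety {tau} (K : talg tau -> Prop) : Prop :=
  t_variety K /\ closed_expansion K.

(* Term operations commute with t-homomorphisms and are computed componentwise
   in t-products.  Hence an identity valid in A passes to onto images (every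
   thread of the image lifts), to t-subalgebras (the inclusion is an injective
   t-homomorphism) and to t-products.  For t-expansion, an identity of A_{\bar s}
   evaluated at the thread s itself, which lies in the trace of A_{\bar s},
   transfers through the inclusion to the identity at s in A. *)

From Stdlib Require Import List Classical ClassicalEpsilon FunctionalExtensionality.
Import ListNotations.

Section TermInd.
Variables (tau : Type) (P : term tau -> Prop).
Hypothesis P_Var : forall i, P (Var i).
Hypothesis P_App : forall g ts, Forall P ts -> P (App g ts).

Fixpoint term_nested_ind (t : term tau) : P t :=
  match t with
  | Var i => P_Var i
  | App g ts => P_App g ts ((fix F (l : list (term tau)) : Forall P l :=
       match l with
       | [] => Forall_nil _
       | x :: l' => Forall_cons _ (term_nested_ind x) (F l')
       end) ts)
  end.
End TermInd.

Lemma override_map {A B : Type} (f : A -> B) (s : nat -> A) (l : list A) :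
  (fun i => f (override s l i)) = override (fun i => f (s i)) (map f l).
Proof.
  apply functional_extensionality; intro i; unfold override.
  symmetry; apply map_nth.
Qed.

Lemma tr_override {tau} (A : talg tau) s l : tr A s -> tr A (override s l).
Proof.
  apply (tr_closed A); exists (length l); intros i Hi.
  unfold override; symmetry; apply nth_overflow, Hi.
Qed.

Lemma thom_eval {tau} {A B : talg tau} {f : car A -> car B} :
  thom A B f -> forall t s, tr A s -> f (eval A t s) = eval B t (fun i => f (s i)).
Proof.
  intros [_ f_ops] t; induction t as [i|g ts IH] using term_nested_ind;
    intros s Hs; simpl; [reflexivity|].
  rewrite f_ops by (apply tr_override, Hs); rewrite override_map, map_map.
  do 2 f_equal; apply map_ext_Forall.
  eapply Forall_impl; [|exact IH]; intros u Hu; exact (Hu s Hs).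
Qed.

Lemma tprod_eval {tau} J (A : J -> talg tau) t s j :
  eval (tprod A) t s j = eval (A j) t (fun k => s k j).
Proof.
  revert s; induction t as [i|g ts IH] using term_nested_ind; intros s; simpl;
    [reflexivity|].
  rewrite (override_map (fun x : forall j, car (A j) => x j)), map_map.
  do 2 f_equal; apply map_ext_Forall.
  eapply Forall_impl; [|exact IH]; intros u Hu; exact (Hu s).
Qed.

Lemma thom_eval_theta {tau} {A B : talg tau} {f : car A -> car B} {t u s} :
  thom A B f -> theta A t u -> tr A s ->
  eval B t (fun i => f (s i)) = eval B u (fun i => f (s i)).
Proof.
  intros Hf Htu Hs; rewrite <- !(thom_eval Hf) by exact Hs; f_equal; exact (Htu s Hs).
Qed.

Lemma onto_thom_theta {tau} {A B : talg tau} {f : car A -> car B} {t u} :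
  onto_thom A B f -> theta A t u -> theta B t u.
Proof.
  intros [Hf [_ lift]] Htu r Hr.
  destruct (lift r Hr) as [s [Hs Hfs]].
  replace r with (fun i => f (s i)) by (apply functional_extensionality, Hfs).
  exact (thom_eval_theta Hf Htu Hs).
Qed.

Lemma inj_thom_theta {tau} {A B : talg tau} {f : car A -> car B} {t u} :
  thom A B f -> (forall x y, f x = f y -> x = y) -> theta B t u -> theta A t u.
Proof.
  intros Hf f_inj Htu s Hs; apply f_inj.
  rewrite !(thom_eval Hf) by exact Hs; apply Htu, (proj1 Hf), Hs.
Qed.

Lemma tprod_theta {tau} J (A : J -> talg tau) t u :
  (forall j, theta (A j) t u) -> theta (tprod A) t u.
Proof.
  intros Htu s Hs; apply functional_extensionality_dep; intro j.
  rewrite !tprod_eval; exact (Htu j _ (Hs j)).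
Qed.

Section Subalgebra.
Context {tau : Type} (A : talg tau) (P : car A -> Prop) (b : (nat -> sig P) -> Prop)
  (b_ne : exists r, b r)
  (b_closed : forall r s, eqN r s -> b r -> b s)
  (b_sub : forall r, b r -> tr A (fun i => proj1_sig (r i)))
  (b_ops : forall g r, b r -> P (ops A g (fun i => proj1_sig (r i)))).

Lemma tsub_incl_thom : thom (@tsub tau A P b b_ne b_closed b_ops) A (@proj1_sig _ P).
Proof.
  split; [exact b_sub|].
  intros g s Hs; simpl; unfold sub_ops.
  destruct (excluded_middle_informative (b s)); [reflexivity|contradiction].
Qed.

Lemma tsub_theta t u : theta A t u -> theta (@tsub tau A P b b_ne b_closed b_ops) t u.
Proof.
  apply (inj_thom_theta tsub_incl_thom).
  intros [x Hx] [y Hy]; simpl; intros ->; f_equal; apply proof_irrelevance.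
Qed.
End Subalgebra.

Arguments tsub_incl_thom {tau A P b b_ne b_closed} b_sub b_ops.
Arguments tsub_theta {tau A P b b_ne b_closed} b_sub b_ops {t u}.

Lemma Abar_theta_eval {tau} {A : talg tau} {s} (hs : tr A s) {t u} :
  theta (Abar A s) t u -> eval A t s = eval A u s.
Proof.
  intro Htu.
  pose (r i := exist (Abar_set A s) (s i) (ex_intro _ (Var i) eq_refl)).
  assert (Hr : Abar_tr r) by (exists 0; reflexivity).
  exact (thom_eval_theta (tsub_incl_thom (Abar_sub hs) (Abar_ops (s:=s))) Htu Hr).
Qed.

Theorem mainTheorem9 (tau : Type) (Sigma : term tau -> term tau -> Prop) :
  Et_variety (Mod Sigma).
Proof.
  split; [split; [|split]|].
  - intros A B f HA Hf t u Htu; exact (onto_thom_theta Hf (HA t u Htu)).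
  - intros A P b b_ne b_closed b_sub b_ops HA t u Htu.
    exact (tsub_theta b_sub b_ops (HA t u Htu)).
  - intros J A HA t u Htu; apply tprod_theta; intro j; exact (HA j t u Htu).
  - intros A HA t u Htu s hs; exact (Abar_theta_eval hs (HA s hs t u Htu)).
Qed.
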